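(* Let $d,n\ge1$, $t=d+n$, $u=\binom{n+2}{2}$, $p=u(d+1)-1$, let ${\mathbb X}\subseteq{\mathbb P}^2$ be a set of $\binom{d+1}{2}$ points in generic position, and let ${\bf L}=(L_{lj})$, $F_1,\dots,F_{d+1}$, $\lambda_{ljk}$ and the matrix ${\bf E}$ be as in the context. Let $\overline{\Lambda_t}\subseteq{\mathbb P}^p$ be the closure of the image of the rational map $\varphi:{\mathbb P}^2 - - \rightarrow{\mathbb P}^p$, $\varphi([w_1:w_2:w_3])=[x_{ij}]$ with $x_{ij}=z_iF_j$. Let ${\bf V}\subseteq{\mathbb P}^p$ be the zero set of the following equations in the coordinates $x_{ij}$: (1) the $\binom{n+1}{2}d$ linear equations $\sum_{(\alpha,j)}{\bf E}_{(\beta,l),(\alpha,j)}x_{i(\alpha)j}=0$, one for each row $(\beta,l)$ of ${\bf E}$, where $i(\alpha)$ is the index with $z_{i(\alpha)}=w^\alpha$; (2) all $2\times2$ minors of the $u\times(d+1)$ matrix $(x_{ij})$; (3) for each $j=1,\dots,d+1$, all $2\times2$ minors of the $3\times\binom{n+1}{2}$ catalecticant matrix whose entry in row $k\in\{1,2,3\}$ and column $w^\beta$ ($|\beta|=n-1$) is $x_{i(\gamma)j}$ where $w^\gamma=w_kw^\beta$. Then ${\bf V}=\overline{\Lambda_t}$ as sets.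
   Context: $\mathfrak{k}$ is algebraically closed of characteristic $0$; $w^\alpha=w_1^{\alpha_1}w_2^{\alpha_2}w_3^{\alpha_3}$, $|\alpha|=\sum\alpha_i$. $z_1=w_1^n,z_2=w_1^{n-1}w_2,\dots,z_u=w_3^n$ are the degree-$n$ monomials in lexicographic order ($w_1>w_2>w_3$). ''Generic position'' means $\dim_{\mathfrak{k}}(\mathfrak{k}[w_1,w_2,w_3]/I_{\mathbb X})_s=\min\{\binom{s+2}{2},|{\mathbb X}|\}$ for all $s$; then the homogeneous ideal $I_{\mathbb X}$ is generated by $F_j=(-1)^{j+1}\det({\bf L}\setminus j\text{-th column})$, $j=1,\dots,d+1$, for a $d\times(d+1)$ matrix ${\bf L}=(L_{lj})$ of linear forms; write $L_{lj}=\sum_{k=1}^3\lambda_{ljk}w_k$. ${\bf E}$ is the matrix with rows indexed by $(\beta,l)$, $|\beta|=n-1$, $1\le l\le d$, columns indexed by $(\alpha,j)$, $|\alpha|=n$, $1\le j\le d+1$, and entry $\lambda_{ljk}$ if $w^\alpha=w^\beta w_k$ for some $k$, $0$ otherwise (so the linear equations (1) encode the relations $\sum_j L_{lj}w^\beta F_j=0$). $\overline{\Lambda_t}$ is the embedding of the blowup of ${\mathbb P}^2$ at ${\mathbb X}$ by the linear system of degree-$t$ forms in $I_{\mathbb X}$. *)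

From HB Require Import structures.
From mathcomp Require Import all_boot all_order all_algebra.
From mathcomp Require Import mpoly.
Set Implicit Arguments. Unset Strict Implicit. Unset Printing Implicit Defensive.
Import Order.TTheory GRing.Theory Num.Theory.
Local Open Scope ring_scope.

(* Monomials w^a in w_1,w_2,w_3 (indices 'I_3) of total degree m, as exponent
   vectors. *)
Definition mono (m : nat) :=
  {a : {ffun 'I_3 -> 'I_m.+1} | (\sum_(k < 3) (a k : nat))%N == m}.

Definition expo (m : nat) (a : mono m) (k : 'I_3) : nat := val (val a k).

Definition monev (K : ringType) (m : nat) (a : mono m) (w : 'I_3 -> K) : K :=
  \prod_(k < 3) w k ^+ expo a k.

(* Evaluation matrix of the degree-s monomials at the points of X
   (rows: monomials of degree s, columns: points). Its rank is
   dim (k[w]/I_X)_s. *)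
Definition evmx (K : ringType) (N s : nat) (pts : 'I_N -> 'I_3 -> K)
  : 'M[K]_(#|{: mono s}|, N) :=
  \matrix_(i < #|{: mono s}|, j < N) monev (enum_val i) (pts j).

Definition generic_position (K : fieldType) (N : nat) (pts : 'I_N -> 'I_3 -> K)
  : Prop :=
  forall s : nat, \rank (evmx s pts) = minn 'C(s.+2, 2) N.

Definition Lmat (K : comRingType) (d : nat) (lam : 'I_d -> 'I_d.+1 -> 'I_3 -> K)
  : 'M[{mpoly K[3]}]_(d, d.+1) :=
  \matrix_(l < d, j < d.+1) \sum_(k < 3) lam l j k *: 'X_k.

(* F_j = (-1)^(j+1) det(L minus j-th column), j 1-indexed;
   with 0-indexed j the sign is (-1)^j. *)
Definition Fpol (K : comRingType) (d : nat) (lam : 'I_d -> 'I_d.+1 -> 'I_3 -> K)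
  (j : 'I_d.+1) : {mpoly K[3]} :=
  (-1) ^+ j * \det (col' j (Lmat lam)).

(* f lies in the homogeneous ideal I_X (vanishes on the cone over X) *)
Definition in_IX (K : comRingType) (N : nat) (pts : 'I_N -> 'I_3 -> K)
  (f : {mpoly K[3]}) : Prop :=
  forall (i : 'I_N) (c : K), f.@[fun k => c * pts i k] = 0.

Definition IX_generated_by_F (K : comRingType) (N d : nat)
  (pts : 'I_N -> 'I_3 -> K) (lam : 'I_d -> 'I_d.+1 -> 'I_3 -> K) : Prop :=
  forall f : {mpoly K[3]},
    in_IX pts f <-> exists g : 'I_d.+1 -> {mpoly K[3]},
                      f = \sum_(j < d.+1) g j * Fpol lam j.

(* Coordinates x_{ij} of P^p, indexed by (w^alpha, j) with |alpha| = n,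
   i.e. i = i(alpha). *)
Definition pcoord (n d : nat) := (mono n * 'I_d.+1)%type.

(* x_{i(gamma) j} for a given exponent vector gamma (0 if |gamma| <> n) *)
Definition xat (K : ringType) (n d : nat) (x : pcoord n d -> K)
  (e : 'I_3 -> nat) (j : 'I_d.+1) : K :=
  match [pick a : mono n | [forall k, expo a k == e k]] with
  | Some a => x (a, j)
  | None => 0
  end.

Definition shiftexp (m : nat) (b : mono m) (k : 'I_3) : 'I_3 -> nat :=
  fun k' => (expo b k' + (k' == k))%N.

Definition Eent (K : ringType) (n d : nat) (lam : 'I_d -> 'I_d.+1 -> 'I_3 -> K)
  (b : mono n.-1) (l : 'I_d) (a : mono n) (j : 'I_d.+1) : K :=
  match [pick k : 'I_3 | [forall k', expo a k' == shiftexp b k k']] with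
  | Some k => lam l j k
  | None => 0
  end.

Definition inV (K : ringType) (n d : nat) (lam : 'I_d -> 'I_d.+1 -> 'I_3 -> K)
  (x : pcoord n d -> K) : Prop :=
  (forall (b : mono n.-1) (l : 'I_d),
      \sum_(aj : pcoord n d) Eent lam b l aj.1 aj.2 * x aj = 0)
  /\
  (forall (a a' : mono n) (j j' : 'I_d.+1),
      x (a, j) * x (a', j') - x (a, j') * x (a', j) = 0)
  /\
  (forall (j : 'I_d.+1) (k k' : 'I_3) (b b' : mono n.-1),
      xat x (shiftexp b k) j * xat x (shiftexp b' k') j
      - xat x (shiftexp b' k) j * xat x (shiftexp b k') j = 0).

(* image of phi : [w] |-> [z_i(w) F_j(w)], as nonzero affine representatives *)
Definition in_image_phi (K : comRingType) (n d : nat)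
  (lam : 'I_d -> 'I_d.+1 -> 'I_3 -> K) (x : pcoord n d -> K) : Prop :=
  (exists c, x c != 0) /\
  exists w : 'I_3 -> K,
    forall (a : mono n) (j : 'I_d.+1), x (a, j) = monev a w * (Fpol lam j).@[w].

Definition zariski_closure (K : comRingType) (I : finType)
  (S : (I -> K) -> Prop) (x : I -> K) : Prop :=
  forall (D : nat) (f : {mpoly K[#|{: I}|]}),
    f \is D.-homog ->
    (forall y, S y -> f.@[fun i => y (enum_val i)] = 0) ->
    f.@[fun i => x (enum_val i)] = 0.

From HB Require Import structures.
From mathcomp Require Import all_boot all_order all_algebra.
From mathcomp Require Import mpoly.
From mathcomp Require Import ring.
From Stdlib Require Import Classical.
Import GRing.Theory.
Local Open Scope ring_scope.
Set Implicit Arguments. Unset Strict Implicit. Unset Printing Implicit Defensive.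

(* The equations of V are forms vanishing on the image of phi, so the closure
   lies in V. Conversely, the 2x2 minors make a point of V a Segre point
   x_(alpha,j) = w^alpha s_j, the catalecticant minors make w^alpha a Veronese
   point, and the linear equations say L(w) s = 0. If some F_j(w) is nonzero,
   L(w) has corank one, so s is proportional to (F_j(w))_j and x is phi(w).
   Otherwise w is a point p of X. Products of linear forms through the other
   points of X lie in I_X; this shows that the gradients of the F_j at p span a
   plane, which forces L(p) to have rank at least d - 1, so the kernel of L(p) is
   spanned by the derivatives (d_q F_j(p))_j. Such a point is the limit at t = 0
   of phi(p + t q) / t, hence lies in the closure. *)

Section Monomials.
Variable m : nat.

Lemma expo_sum (a : mono m) : (\sum_(k < 3) expo a k)%N = m.
Proof. by case: a => f hf; apply/eqP. Qed.

Lemma expo_inj (a a' : mono m) : (forall k, expo a k = expo a' k) -> a = a'.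
Proof. by move=> H; apply: val_inj; apply/ffunP => k; apply: val_inj; exact: H. Qed.

Variables (e : 'I_3 -> nat) (he : (\sum_(k < 3) e k)%N = m).

Let e_ltS k : (e k < m.+1)%N.
Proof. by rewrite ltnS -he (bigD1 k) //= leq_addr. Qed.

Fact mono_of_subproof :
  (\sum_(k < 3) ([ffun k => inord (e k)] : {ffun 'I_3 -> 'I_m.+1}) k == m)%N.
Proof.
by apply/eqP; rewrite -[RHS]he; apply: eq_bigr => k _; rewrite ffunE inordK ?e_ltS.
Qed.

Definition mono_of : mono m :=
  exist (fun a : {ffun 'I_3 -> 'I_m.+1} => (\sum_(k < 3) (a k : nat) == m)%N) _
    mono_of_subproof.

Lemma expo_mono_of k : expo mono_of k = e k.
Proof. by rewrite /expo /= ffunE inordK ?e_ltS. Qed.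

End Monomials.

Lemma monev_scale (K : comRingType) n (a : mono n) (c : K) (w : 'I_3 -> K) :
  monev a (fun k => c * w k) = c ^+ n * monev a w.
Proof.
rewrite /monev (eq_bigr (fun k => c ^+ expo a k * w k ^+ expo a k)); last first.
  by move=> k _; rewrite exprMn.
by rewrite big_split /= prodrXr expo_sum.
Qed.

Fact mono_pow_subproof m (k : 'I_3) :
  (\sum_(i < 3) (if i == k then m else 0))%N = m.
Proof. by rewrite -big_mkcond big_pred1_eq. Qed.

Definition mono_pow m k : mono m := mono_of (mono_pow_subproof m k).

Lemma monev_mono_pow (K : comRingType) m k (w : 'I_3 -> K) :
  monev (mono_pow m k) w = w k ^+ m.
Proof.
rewrite /monev (bigD1 k) //= big1 ?mulr1; first by rewrite expo_mono_of eqxx.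
by move=> i /negbTE Hi; rewrite expo_mono_of Hi expr0.
Qed.

Section ShiftedMonomials.
Variables (n : nat) (hn : (0 < n)%N).

Fact shiftexp_sum (b : mono n.-1) k : (\sum_(i < 3) shiftexp b k i)%N = n.
Proof.
rewrite /shiftexp big_split /= expo_sum -big_mkcond /= big_pred1_eq.
by rewrite addn1 prednK.
Qed.

Definition mono_shift (b : mono n.-1) k : mono n := mono_of (shiftexp_sum b k).

Lemma expo_mono_shift b k i : expo (mono_shift b k) i = (expo b i + (i == k))%N.
Proof. by rewrite expo_mono_of. Qed.

Lemma mono_shift_inj b : injective (mono_shift b).
Proof.
move=> k k' E; have := expo_mono_shift b k k; rewrite E expo_mono_shift eqxx.
by move/addnI; case: eqP.
Qed.

Lemma monev_mono_shift (K : comRingType) b k (w : 'I_3 -> K) :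
  monev (mono_shift b k) w = monev b w * w k.
Proof.
rewrite /monev (eq_bigr (fun i => w i ^+ expo b i * w i ^+ (i == k))); last first.
  by move=> i _; rewrite expo_mono_shift exprD.
rewrite big_split /= [X in _ * X](bigD1 k) //= eqxx expr1 [X in _ * (_ * X)]big1 ?mulr1 //.
by move=> i /negbTE ->; rewrite expr0.
Qed.

Lemma xat_expo (K : ringType) d (x : pcoord n d -> K) (a : mono n) e j :
  (forall k, expo a k = e k) -> xat x e j = x (a, j).
Proof.
move=> Ea; rewrite /xat; case: pickP => [a' /forallP Ea'|/(_ a)/forallP[]k].
  by congr x; congr pair; apply: expo_inj => k; rewrite Ea; apply/eqP.
by rewrite Ea.
Qed.

Lemma xat_mono_shift (K : ringType) d (x : pcoord n d -> K) b k j :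
  xat x (shiftexp b k) j = x (mono_shift b k, j).
Proof. by apply: xat_expo => i; rewrite expo_mono_shift. Qed.

Lemma Eent_mono_shift (K : ringType) d lam b l (a : mono n) (j : 'I_d.+1) :
  @Eent K n d lam b l a j = \sum_k (if a == mono_shift b k then lam l j k else 0).
Proof.
rewrite /Eent; case: pickP => [k0 /forallP Hk0|Hn].
  have -> : a = mono_shift b k0.
    by apply: expo_inj => i; rewrite expo_mono_shift; apply/eqP.
  rewrite -big_mkcond /= (eq_bigl (pred1 k0)) ?big_pred1_eq // => k /=.
  by rewrite (inj_eq (@mono_shift_inj b)) eq_sym.
rewrite big1 // => k _; case: eqP => // Ea.
by have /forallP[] := negbT (Hn k) => i; rewrite Ea expo_mono_shift.
Qed.

End ShiftedMonomials.

Definition segre {K : ringType} {n d : nat} (w : 'I_3 -> K) (t : 'I_d.+1 -> K)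
  : pcoord n d -> K := fun c => monev c.1 w * t c.2.

Definition Lmat_at (K : comRingType) d (lam : 'I_d -> 'I_d.+1 -> 'I_3 -> K)
  (w : 'I_3 -> K) : 'M[K]_(d, d.+1) := \matrix_(l, j) \sum_k lam l j k * w k.

Definition Fpol_at (K : comRingType) d (lam : 'I_d -> 'I_d.+1 -> 'I_3 -> K)
  (w : 'I_3 -> K) (j : 'I_d.+1) : K := (Fpol lam j).@[w].

(* Laplace expansion along row 0 of M with its row l repeated on top. *)
Lemma sum_mul_signed_minors_eq0 (R : comRingType) d (M : 'M[R]_(d, d.+1)) l :
  \sum_j M l j * ((-1) ^+ j * \det (col' j M)) = 0.
Proof.
pose A : 'M[R]_d.+1 :=
  \matrix_(i, j) (if unlift 0 i is Some i' then M i' j else M l j).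
have A0 : \det A = 0.
  apply: (@determinant_alternate _ _ A 0 (lift 0 l)).
    by apply/eqP => /(congr1 val).
  by move=> j; rewrite !mxE unlift_none liftK.
rewrite -[RHS]A0 (expand_det_row A 0); apply: eq_bigr => j _.
rewrite !mxE unlift_none /cofactor add0n; congr (_ * (_ * \det _)).
by apply/matrixP => i j'; rewrite !mxE liftK.
Qed.

Section EquationsAtPoint.
Variables (K : comRingType) (d : nat) (lam : 'I_d -> 'I_d.+1 -> 'I_3 -> K).

Lemma map_Lmat_meval w : map_mx (meval w) (Lmat lam) = Lmat_at lam w.
Proof.
apply/matrixP => l j; rewrite !mxE /= rmorph_sum; apply: eq_bigr => k _.
by rewrite /= mevalZ mevalXU.
Qed.

Lemma meval_Lmat w l j : (Lmat lam l j).@[w] = Lmat_at lam w l j.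
Proof. by rewrite -map_Lmat_meval [RHS]mxE. Qed.

Lemma Fpol_rmorph (S : comRingType) (f : {rmorphism {mpoly K[3]} -> S}) j :
  f (Fpol lam j) = (-1) ^+ j * \det (col' j (map_mx f (Lmat lam))).
Proof.
rewrite /Fpol rmorphM rmorphXn rmorphN1 -det_map_mx; congr (_ * \det _).
by apply/matrixP => a b; rewrite !mxE.
Qed.

Lemma Fpol_atE w j : Fpol_at lam w j = (-1) ^+ j * \det (col' j (Lmat_at lam w)).
Proof. by rewrite -map_Lmat_meval -(Fpol_rmorph (meval w)). Qed.

Lemma Lmat_Fpol_eq0 l : \sum_j Lmat lam l j * Fpol lam j = 0.
Proof. exact: sum_mul_signed_minors_eq0. Qed.

Lemma Lmat_at_Fpol_at_eq0 w l : \sum_j Lmat_at lam w l j * Fpol_at lam w j = 0.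
Proof.
under eq_bigr do rewrite Fpol_atE; exact: sum_mul_signed_minors_eq0.
Qed.

Lemma sum_Eent_segre n (hn : (0 < n)%N) (b : mono n.-1) l w s :
  \sum_(aj : pcoord n d) Eent lam b l aj.1 aj.2 * segre w s aj
  = monev b w * \sum_j Lmat_at lam w l j * s j.
Proof.
rewrite -(pair_bigA _ (fun a j => Eent lam b l a j * segre w s (a, j))) /=.
rewrite exchange_big mulr_sumr; apply: eq_bigr => j _ /=.
under eq_bigr do rewrite (Eent_mono_shift hn) mulr_suml.
rewrite exchange_big /= mxE mulr_suml mulr_sumr; apply: eq_bigr => k _.
rewrite (eq_bigr (fun a =>
  if a == mono_shift hn b k then lam l j k * segre w s (a, j) else 0)).
  rewrite -big_mkcond big_pred1_eq /segre /= monev_mono_shift; ring.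
by move=> a _; case: eqP => _; rewrite ?mul0r.
Qed.

End EquationsAtPoint.

Section Coordinates.
Variables (K : comRingType) (n d : nat).
Local Notation N := #|{: pcoord n d}|.

Definition coords (x : pcoord n d -> K) : 'I_N -> K := fun i => x (enum_val i).

Definition coordX (c : pcoord n d) : {mpoly K[N]} := 'X_(enum_rank c).

Lemma meval_coordX x c : (coordX c).@[coords x] = x c.
Proof. by rewrite /coordX mevalXU /coords enum_rankK. Qed.

Lemma coordX_homog c : coordX c \is 1.-homog.
Proof. by rewrite /coordX dhomogX; apply/eqP; apply: mdeg1. Qed.

Definition xatX e j : {mpoly K[N]} :=
  if [pick a : mono n | [forall k, expo a k == e k]] is Some a then coordX (a, j)
  else 0.

Lemma meval_xatX x e j : (xatX e j).@[coords x] = xat x e j.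
Proof. by rewrite /xatX /xat; case: pickP => [a _|_]; rewrite ?meval_coordX ?meval0. Qed.

Lemma xatX_homog e j : xatX e j \is 1.-homog.
Proof. by rewrite /xatX; case: pickP => [a _|_]; rewrite ?coordX_homog ?dhomog0. Qed.

Lemma minor2_homog (A B C D : {mpoly K[N]}) :
  A \is 1.-homog -> B \is 1.-homog -> C \is 1.-homog -> D \is 1.-homog ->
  A * B - C * D \is 2.-homog.
Proof. by move=> hA hB hC hD; rewrite rpredB // (dhomogM (d := 1%N) (e := 1%N)). Qed.

Lemma meval_homog_scale D (f : {mpoly K[N]}) (c : K) (v : 'I_N -> K) :
  f \is D.-homog -> f.@[fun i => c * v i] = c ^+ D * f.@[v].
Proof.
move=> /dhomogP hf; rewrite !mevalE mulr_sumr; apply: eq_big_seq => m hm.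
rewrite mulrCA; congr (_ * _).
under eq_bigr do rewrite exprMn.
by rewrite big_split /= prodrXr -mdegE (hf m hm).
Qed.

Lemma meval_coords_scale D (f : {mpoly K[N]}) (x y : pcoord n d -> K) (c : K) :
  f \is D.-homog -> (forall a, x a = c * y a) ->
  f.@[coords x] = c ^+ D * f.@[coords y].
Proof. by move=> hf E; rewrite -meval_homog_scale //; apply: meval_eq => i; apply: E. Qed.

Lemma closure_eq0 lam D (f : {mpoly K[N]}) x :
  zariski_closure (in_image_phi lam) x -> f \is D.-homog ->
  (forall w, f.@[coords (segre w (Fpol_at lam w))] = 0) -> f.@[coords x] = 0.
Proof.
move=> Hx hf Hf; apply: (Hx D f hf) => y [_ [w Hw]].
by rewrite -(Hf w); apply: meval_eq => i; rewrite /coords; case: (enum_val i).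
Qed.

End Coordinates.

Lemma closure_sub_V (K : comRingType) n d (hn : (0 < n)%N) lam (x : pcoord n d -> K) :
  zariski_closure (in_image_phi lam) x -> inV lam x.
Proof.
move=> Hx; split; [|split].
- move=> b l.
  pose P : {mpoly K[_]} := \sum_(aj : pcoord n d) Eent lam b l aj.1 aj.2 *: coordX K aj.
  have PE y : P.@[coords y] = \sum_(aj : pcoord n d) Eent lam b l aj.1 aj.2 * y aj.
    by rewrite /P rmorph_sum; apply: eq_bigr => aj _; rewrite /= mevalZ meval_coordX.
  rewrite -PE; apply: (closure_eq0 (D := 1%N) Hx).
    by apply: rpred_sum => aj _; rewrite rpredZ ?coordX_homog.
  by move=> w; rewrite PE (sum_Eent_segre _ hn) Lmat_at_Fpol_at_eq0 mulr0.
- move=> a a' j j'.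
  have := closure_eq0 Hx (minor2_homog (coordX_homog K (a, j)) (coordX_homog K (a', j'))
    (coordX_homog K (a, j')) (coordX_homog K (a', j))).
  rewrite mevalB !mevalM !meval_coordX; apply => w.
  by rewrite mevalB !mevalM !meval_coordX /segre /=; ring.
- move=> j k k' b b'.
  have := closure_eq0 Hx (minor2_homog (xatX_homog K n (shiftexp b k) j)
    (xatX_homog K n (shiftexp b' k') j) (xatX_homog K n (shiftexp b' k) j)
    (xatX_homog K n (shiftexp b k') j)).
  rewrite mevalB !mevalM !meval_xatX; apply => w.
  rewrite mevalB !mevalM !meval_xatX !(xat_mono_shift hn) /segre /=.
  by rewrite !(monev_mono_shift hn); ring.
Qed.

Definition expvec := {ffun 'I_3 -> nat}.
Definition edeg (e : expvec) := (\sum_(k < 3) e k)%N.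
Definition einc (e : expvec) (k : 'I_3) : expvec := [ffun i => (e i + (i == k))%N].
Definition epow (K : ringType) (w : 'I_3 -> K) (e : expvec) : K := \prod_(i < 3) w i ^+ e i.

Lemma edeg_einc e k : edeg (einc e k) = (edeg e).+1.
Proof.
rewrite /edeg (eq_bigr (fun i => e i + (i == k)))%N; last by move=> i _; rewrite ffunE.
by rewrite big_split /= -big_mkcond /= big_pred1_eq addn1.
Qed.

Lemma epow_einc (K : comRingType) (w : 'I_3 -> K) e k : epow w (einc e k) = epow w e * w k.
Proof.
rewrite /epow (eq_bigr (fun i => w i ^+ e i * w i ^+ (i == k))); last first.
  by move=> i _; rewrite ffunE exprD.
rewrite big_split /= [X in _ * X](bigD1 k) //= eqxx expr1 [X in _ * (_ * X)]big1 ?mulr1 //.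
by move=> i /negbTE ->; rewrite expr0.
Qed.

Lemma einc_comm e k k' : einc (einc e k) k' = einc (einc e k') k.
Proof. by apply/ffunP => i; rewrite !ffunE -!addnA [((i == k) + _)%N]addnC. Qed.

Lemma edeg0 e : edeg e = 0%N -> e = [ffun => 0%N].
Proof.
move=> e0; apply/ffunP => i; rewrite ffunE; apply/eqP; rewrite -leqn0 -[X in (_ <= X)%N]e0.
by rewrite /edeg (bigD1 i) //= leq_addr.
Qed.

Lemma edeg_succ e s : edeg e = s.+1 -> exists k b, edeg b = s /\ e = einc b k.
Proof.
move=> es.
have [k ek] : exists k, (0 < e k)%N.
  apply/existsP; apply: contraT; rewrite negb_exists => /forallP e0.
  by move: es; rewrite /edeg big1 // => i _; apply/eqP; rewrite -leqn0 leqNgt e0.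
pose b : expvec := [ffun i => (e i - (i == k))%N].
have Eb : einc b k = e.
  apply/ffunP => i; rewrite !ffunE; case: eqP => [->|_]; last by rewrite subn0 addn0.
  by rewrite subnK.
by exists k, b; split => //; apply: succn_inj; rewrite -(edeg_einc _ k) Eb.
Qed.

Definition catalecticant_rank1 (K : ringType) (s : nat) (Z : expvec -> K) :=
  forall b b', edeg b = s -> edeg b' = s -> forall k k',
    Z (einc b k) * Z (einc b' k') = Z (einc b' k) * Z (einc b k').

Lemma catalecticant_rank1_einc (K : ringType) s (Z : expvec -> K) k0 :
  catalecticant_rank1 s.+1 Z -> catalecticant_rank1 s (fun b => Z (einc b k0)).
Proof.
move=> HZ b b' hb hb' k k'.
by rewrite !(einc_comm _ _ k0) HZ ?edeg_einc ?hb ?hb'.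
Qed.

Lemma catalecticant_rank1_veronese (K : fieldType) s (Z : expvec -> K) :
  catalecticant_rank1 s Z -> (exists e, edeg e = s.+1 /\ Z e != 0) ->
  exists mu (w : 'I_3 -> K), forall e, edeg e = s.+1 -> Z e = mu * epow w e.
Proof.
elim: s Z => [|s IH] Z HZ [e1 [He1 Ze1]].
  exists 1, (fun k => Z (einc [ffun => 0%N] k)) => e /edeg_succ[k [b [/edeg0 -> ->]]].
  by rewrite epow_einc mul1r /epow big1 ?mul1r // => i _; rewrite ffunE.
have [k0 [b0 [Hb0 Ee1]]] := edeg_succ He1; rewrite {e1 He1}Ee1 in Ze1.
have [mu [v Hv]] :=
  IH _ (catalecticant_rank1_einc k0 HZ) (ex_intro _ b0 (conj Hb0 Ze1)).
have [k1 [be [Hbe Eb0]]] := edeg_succ Hb0.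
have Z0E : Z (einc b0 k0) = mu * epow v be * v k1.
  by rewrite Hv // Eb0 epow_einc mulrA.
have mu_be : mu * epow v be != 0 by apply: contra_neq Ze1 => E; rewrite Z0E E mul0r.
have Hu k : Z (einc b0 k0) * v k = Z (einc b0 k) * v k0.
  apply: (mulfI mu_be).
  have := HZ b0 (einc be k0) Hb0 (etrans (edeg_einc _ _) (congr1 _ Hbe)) k0 k.
  rewrite (einc_comm be k0 k) !Hv ?edeg_einc ?Hbe // !epow_einc => E.
  by apply: etrans (etrans E _); ring.
have vk1 : v k1 != 0 by apply: contra_neq Ze1 => v0; rewrite Z0E v0 mulr0.
have vk0 : v k0 != 0.
  by apply: contra_neq (mulf_neq0 Ze1 vk1) => v0; rewrite Hu v0 mulr0.
exists (mu / v k0), v => e /edeg_succ[k [b [Hb ->]]].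
apply: (mulIf Ze1); rewrite (HZ b b0 Hb Hb0 k k0) Hv // epow_einc.
have -> : Z (einc b0 k) = Z (einc b0 k0) / v k0 * v k by rewrite mulrAC Hu mulfK.
by field.
Qed.

Definition expvec_of n (a : mono n) : expvec := [ffun k => expo a k].

Lemma edeg_expvec_of n (a : mono n) : edeg (expvec_of a) = n.
Proof. by rewrite /edeg -[RHS](expo_sum a); apply: eq_bigr => k _; rewrite ffunE. Qed.

Lemma epow_expvec_of (K : ringType) n (a : mono n) (w : 'I_3 -> K) :
  epow w (expvec_of a) = monev a w.
Proof. by apply: eq_bigr => k _; rewrite ffunE. Qed.

Lemma V_segre (K : fieldType) n d (hn : (0 < n)%N) lam (x : pcoord n d -> K) :
  (exists c, x c != 0) -> inV lam x ->
  exists (w : 'I_3 -> K) (s : 'I_d.+1 -> K),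
    [/\ exists k, w k != 0, x =1 segre w s &
        forall l, \sum_j Lmat_at lam w l j * s j = 0].
Proof.
move=> [[a0 j0] x0] [Hlin [Hminor Hcat]].
pose Z (e : expvec) := xat x e j0.
have Z_einc b (hb : edeg b = n.-1) k : Z (einc b k) = x (mono_shift hn (mono_of hb) k, j0).
  by apply: xat_expo => i; rewrite expo_mono_shift expo_mono_of ffunE.
have Z_expvec a : Z (expvec_of a) = x (a, j0) by apply: xat_expo => k; rewrite ffunE.
have HZ : catalecticant_rank1 n.-1 Z.
  move=> b b' hb hb' k k'; rewrite !(Z_einc _ hb) !(Z_einc _ hb').
  apply/eqP; rewrite -subr_eq0 -!(xat_mono_shift hn); apply/eqP; exact: Hcat.
have degn (a : mono n) : edeg (expvec_of a) = n.-1.+1 by rewrite edeg_expvec_of prednK.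
have [|mu [w Hw]] := catalecticant_rank1_veronese HZ.
  by exists (expvec_of a0); rewrite degn Z_expvec.
have x_j0 a : x (a, j0) = mu * monev a w by rewrite -Z_expvec Hw ?epow_expvec_of.
have wnz : exists k, w k != 0.
  have [k [b [_ Ea0]]] := edeg_succ (degn a0).
  exists k; apply: contra_neq x0 => wk0.
  by rewrite -Z_expvec Hw // Ea0 epow_einc wk0 !mulr0.
pose s j := mu * (x (a0, j) / x (a0, j0)).
have Hx : x =1 segre w s.
  case=> a j; rewrite /segre /s /= mulrA [_ * mu]mulrC -x_j0 mulrA.
  apply: (canRL (mulfK x0)).
  by apply/eqP; rewrite -subr_eq0 Hminor.
exists w, s; split => // l.
have [k1 wk1] := wnz.
have := Hlin (mono_pow n.-1 k1) l.
under eq_bigr do rewrite Hx.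
rewrite (sum_Eent_segre _ hn) monev_mono_pow => /eqP.
by rewrite mulf_eq0 expf_eq0 (negbTE wk1) andbF => /eqP.
Qed.

Lemma pchar0_natr_inj (K : fieldType) :
  [pchar K] =i pred0 -> injective (fun m : nat => m%:R : K).
Proof.
move=> /pcharf0P charK; suff lt_neq a b : (a < b)%N -> a%:R != b%:R :> K.
  by move=> a b Eab; case: (ltngtP a b) => [/lt_neq|/lt_neq|//]; rewrite Eab eqxx.
move=> lt_ab; rewrite eq_sym -subr_eq0 -natrB ?(ltnW lt_ab) // charK.
by rewrite subn_eq0 -ltnNge.
Qed.

Lemma poly_eq0_on_nonzero (K : fieldType) (p : {poly K}) :
  [pchar K] =i pred0 -> (forall t, t != 0 -> p.[t] = 0) -> p = 0.
Proof.
move=> charK p0; apply/eqP; apply: contraT => pn0.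
have natS_inj : injective (fun i => i.+1%:R : K).
  by move=> i j /(pchar0_natr_inj charK) [].
have := max_poly_roots pn0 (rs := map (fun i => i.+1%:R) (iota 0 (size p))).
rewrite size_map size_iota ltnn; apply; last by rewrite map_inj_uniq ?iota_uniq.
apply/allP => t /mapP [i _ ->]; apply/rootP/p0.
by move/pcharf0P: charK => ->.
Qed.

Lemma mpoly_ring_ind (K : ringType) N (Q : {mpoly K[N]} -> Prop) :
  (forall c, Q c%:MP) -> (forall i, Q 'X_i) ->
  (forall P R, Q P -> Q R -> Q (P + R)) -> (forall P R, Q P -> Q R -> Q (P * R)) ->
  forall P, Q P.
Proof.
move=> QC QX QD QM P.
have Q1 : Q 1 by rewrite -mpolyC1.
have QXm m : Q 'X_[m].
  rewrite mpolyXE_id; apply: (big_ind Q Q1 QM) => i _.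
  by elim: (m i) => [|e IH]; rewrite ?expr0 // exprS; apply: QM.
rewrite (mpolyE P); apply: big_ind => [|P1 P2|m _]; first by rewrite -mpolyC0.
  exact: QD.
by rewrite -mul_mpolyC; apply: QM.
Qed.

Lemma horner_mmap_polyC (K : comRingType) N (f : {mpoly K[N]}) (h : 'I_N -> {poly K}) t :
  (mmap polyC h f).[t] = f.@[fun i => (h i).[t]].
Proof.
rewrite /mmap mevalE horner_sum; apply: eq_bigr => m _.
rewrite hornerCM /mmap1 horner_prod; congr (_ * _).
by apply: eq_bigr => i _; rewrite horner_exp.
Qed.

Lemma mderivXU (K : ringType) N (i k : 'I_N) :
  ('X_i : {mpoly K[N]})^`M(k) = (i == k)%:R%:MP.
Proof.
rewrite mderivX mnm1E; case: eqP => [->|_]; last by rewrite scale0r mpolyC0.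
have -> : (U_(k) - U_(k))%MM = 0%MM by apply/mnmP => j; rewrite mnmBE mnm0E subnn.
by rewrite mpolyX0 scale1r mpolyC1.
Qed.

Section LineRestriction.
Variables (K : comRingType) (p q : 'I_3 -> K).

Definition line_restr (P : {mpoly K[3]}) : {poly K} :=
  mmap polyC (fun k => (p k)%:P + (q k)%:P * 'X) P.

Lemma horner_line_restr P t : (line_restr P).[t] = P.@[fun k => p k + q k * t].
Proof.
rewrite /line_restr horner_mmap_polyC; apply: meval_eq => k.
by rewrite hornerD hornerC hornerCM hornerX.
Qed.

Lemma line_restr_coef0 P : (line_restr P)`_0 = P.@[p].
Proof.
by rewrite -horner_coef0 horner_line_restr; apply: meval_eq => k; rewrite mulr0 addr0.
Qed.

Lemma line_restr_coef1 P : (line_restr P)`_1 = \sum_k q k * (P^`M(k)).@[p].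
Proof.
elim/mpoly_ring_ind: P => [c|i|P R HP HR|P R HP HR].
- rewrite /line_restr mmapC coefC big1 // => k _.
  by rewrite mderivC meval0 mulr0.
- rewrite /line_restr mmapX mmap1U coefD coefC coefCM coefX mulr1 add0r.
  rewrite (bigD1 i) //= big1 ?addr0; first by rewrite mderivXU eqxx mevalC mulr1.
  by move=> k /negbTE Hk; rewrite mderivXU eq_sym Hk mevalC mulr0.
- rewrite /line_restr rmorphD coefD -!/(line_restr _) HP HR.
  by under [RHS]eq_bigr do rewrite mderivD mevalD mulrDr; rewrite big_split.
- rewrite /line_restr rmorphM -!/(line_restr _) coefM big_ord_recr big_ord1 /=.
  rewrite !line_restr_coef0 HP HR.
  rewrite [RHS](eq_bigr (fun k => P.@[p] * (q k * (R^`M(k)).@[p])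
                                  + q k * (P^`M(k)).@[p] * R.@[p])); last first.
    by move=> k _; rewrite mderivM mevalD !mevalM; ring.
  by rewrite big_split /= -mulr_sumr -mulr_suml.
Qed.

End LineRestriction.

Lemma mxrank_col' (K : fieldType) m n (A : 'M[K]_(m, n.+1)) j :
  (\rank (col' j A) <= \rank A)%N.
Proof.
have -> : col' j A = A *m col' j 1%:M.
  apply/matrixP => i k; rewrite !mxE (bigD1 (lift j k)) //= !mxE eqxx mulr1 big1 ?addr0 //.
  by move=> i' Hi'; rewrite !mxE (negbTE Hi') mulr0.
exact: mxrankM_maxl.
Qed.

Lemma coef1_det_pid_add_scaleX (K : comRingType) m r (C : 'M[K]_m) : (r.+2 <= m)%N ->
  (\det (map_mx polyC (pid_mx r) + 'X *: map_mx polyC C))`_1 = 0.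
Proof.
move=> hr; set M := _ + _.
pose D : 'M[{poly K}]_m := diag_mx (\row_i (if (i < r)%N then 1 else 'X)).
pose M' : 'M[{poly K}]_m := \matrix_(i, j) (if (i < r)%N then M i j else (C i j)%:P).
have -> : M = D *m M'.
  rewrite mul_diag_mx; apply/matrixP => i j; rewrite !mxE.
  by case: ifP => hi; rewrite ?mul1r // andbF mulr0n polyC0 add0r.
have detD : \det D = 'X ^+ (m - r).
  rewrite det_diag (eq_bigr (fun i : 'I_m => 'X ^+ (r <= i)%N)); last first.
    by move=> i _; rewrite mxE; case: ltnP.
  rewrite prodrXr -(big_mkord xpredT (fun i => nat_of_bool (r <= i)%N)).
  rewrite (big_cat_nat (leq0n r) (ltnW (ltnW hr))) /=.
  rewrite [X in (X + _)%N](eq_big_nat _ _ (F2 := fun=> 0%N)); last first.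
    by move=> i /andP[_ ir]; rewrite leqNgt ir.
  rewrite [X in (_ + X)%N](eq_big_nat _ _ (F2 := fun=> 1%N)) => [|i /andP[-> _]] //.
  by rewrite !sum_nat_const_nat muln0 muln1.
by rewrite det_mulmx detD coefXnM ltn_subRL addn1 hr.
Qed.

Lemma coef1_det_lowrank (K : fieldType) m (A B : 'M[K]_m) : ((\rank A).+2 <= m)%N ->
  (\det (map_mx polyC A + 'X *: map_mx polyC B))`_1 = 0.
Proof.
move=> hr; set P := col_ebase A; set Q := row_ebase A.
have uP : P \in unitmx by apply: col_ebase_unit.
have uQ : Q \in unitmx by apply: row_ebase_unit.
pose C := invmx P *m B *m invmx Q.
have -> : map_mx polyC A + 'X *: map_mx polyC B = map_mx polyC P *m
    (map_mx polyC (pid_mx (\rank A)) + 'X *: map_mx polyC C) *m map_mx polyC Q.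
  rewrite mulmxDr mulmxDl -!map_mxM mulmx_ebase -scalemxAr -scalemxAl -!map_mxM.
  by rewrite /C !mulmxA mulmxV // mul1mx -mulmxA mulVmx // mulmx1.
rewrite !det_mulmx !det_map_mx mulrC mulrA -polyCM coefCM.
by rewrite coef1_det_pid_add_scaleX ?mulr0.
Qed.

Lemma ker_maximal_minor (K : fieldType) d (M : 'M[K]_(d, d.+1)) (s t : 'I_d.+1 -> K) j1 :
  (forall l, \sum_j M l j * s j = 0) -> (forall l, \sum_j M l j * t j = 0) ->
  \det (col' j1 M) != 0 -> t j1 != 0 -> forall j, s j = s j1 / t j1 * t j.
Proof.
move=> Ms Mt detM tj1; pose c := s j1 / t j1.
pose v : 'cV[K]_d := \col_j' (s (lift j1 j') - c * t (lift j1 j')).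
have Mv : col' j1 M *m v = 0.
  apply/matrixP => l i; rewrite !mxE.
  have : \sum_j M l j * (s j - c * t j) = 0.
    rewrite (eq_bigr (fun j => M l j * s j - c * (M l j * t j))); last by move=> j _; ring.
    by rewrite sumrB -mulr_sumr Ms Mt mulr0 subrr.
  rewrite (bigD1_ord j1) //= /c divfK // subrr mulr0 add0r => E.
  by rewrite -[RHS]E; apply: eq_bigr => j' _; rewrite !mxE.
have uM : col' j1 M \in unitmx by rewrite unitmxE unitfE.
have v0 : v = 0 by rewrite -(mulKmx uM v) Mv mulmx0.
move=> j; apply/eqP; rewrite -subr_eq0; apply/eqP.
case: (unliftP j1 j) => [j' ->|->]; last by rewrite /c divfK // subrr.
by have := congr1 (fun A : 'cV[K]_d => A j' 0) v0; rewrite !mxE.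
Qed.

Section LinearForms.
Variable K : fieldType.

Definition linform (l : 'I_3 -> K) : {mpoly K[3]} := \sum_k l k *: 'X_k.

Lemma meval_linform l v : (linform l).@[v] = \sum_k l k * v k.
Proof.
by rewrite /linform rmorph_sum; apply: eq_bigr => k _; rewrite /= mevalZ mevalXU.
Qed.

Lemma mderiv_linform l k : (linform l)^`M(k) = (l k)%:MP.
Proof.
rewrite /linform raddf_sum (bigD1 k) //= big1 ?addr0.
  by rewrite mderivZ mderivXU eqxx mpolyC1 -mul_mpolyC mulr1.
by move=> i /negbTE Hi; rewrite mderivZ mderivXU Hi mpolyC0 scaler0.
Qed.

Lemma separating_linform (p w : 'I_3 -> K) : (exists k, p k != 0) ->
  (exists c, forall k, w k = c * p k) \/
  (exists l, \sum_k l k * p k = 0 /\ \sum_k l k * w k != 0).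
Proof.
move=> [k0 pk0]; pose c := w k0 / p k0.
have [/forallP wc|] := boolP [forall k, w k == c * p k].
  by left; exists c => k; apply/eqP.
rewrite negb_forall => /existsP [k1 Hk1]; right.
pose l k := (k == k1)%:R * p k0 - (k == k0)%:R * p k1.
have lE v : \sum_k l k * v k = p k0 * v k1 - p k1 * v k0.
  rewrite (eq_bigr (fun k => (k == k1)%:R * (p k0 * v k) - (k == k0)%:R * (p k1 * v k))).
    rewrite sumrB; congr (_ - _).
      by rewrite (bigD1 k1) //= eqxx mul1r big1 ?addr0 // => k /negbTE ->; rewrite mul0r.
    by rewrite (bigD1 k0) //= eqxx mul1r big1 ?addr0 // => k /negbTE ->; rewrite mul0r.
  by move=> k _; rewrite /l; ring.
exists l; rewrite !lE; split; first ring.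
apply: contra Hk1 => /eqP E; apply/eqP; apply: (mulfI pk0).
by rewrite [LHS](subr0_eq E) /c mulrCA mulrA divfK // mulrC.
Qed.

End LinearForms.

Section BaseLocus.
Variables (K : fieldType) (N d : nat) (pts : 'I_N -> 'I_3 -> K).
Hypothesis pts_nz : forall i, exists k, pts i k != 0.
Variable lam : 'I_d -> 'I_d.+1 -> 'I_3 -> K.
Hypothesis hL : IX_generated_by_F pts lam.

Lemma Fpol_in_IX j : in_IX pts (Fpol lam j).
Proof.
apply: (hL (Fpol lam j)).2; exists (fun j' => (j' == j)%:R%:MP).
rewrite (bigD1 j) //= eqxx mpolyC1 mul1r big1 ?addr0 //.
by move=> j' /negbTE ->; rewrite mpolyC0 mul0r.
Qed.

Lemma Fpol_at_pts i j : Fpol_at lam (pts i) j = 0.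
Proof.
by rewrite -(Fpol_in_IX j i 1); apply: meval_eq => k; rewrite mul1r.
Qed.

(* Otherwise a product of linear forms, one through each point of X but not
   through w, would lie in I_X without vanishing at w. *)
Lemma Fpol_base_locus w : (forall j, Fpol_at lam w j = 0) ->
  exists i c, forall k, w k = c * pts i k.
Proof.
move=> Fw0; apply: NNPP => notX.
have sep i : exists l : 'I_3 -> K, \sum_k l k * pts i k = 0 /\ \sum_k l k * w k != 0.
  case: (separating_linform w (pts_nz i)) => // wXi.
  by case: notX; exists i.
have [l Hl] := fin_all_exists sep.
pose h := \prod_i linform (l i).
have hI : in_IX pts h.
  move=> i c; rewrite /h rmorph_prod (bigD1 i) //= meval_linform.
  rewrite (eq_bigr (fun k => c * (l i k * pts i k))); last by move=> k _; ring.
  by rewrite -mulr_sumr (proj1 (Hl i)) mulr0 mul0r.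
have [g hg] := (hL h).1 hI.
have : h.@[w] = 0.
  by rewrite hg rmorph_sum big1 // => j _; rewrite rmorphM /= -/(Fpol_at lam w j) Fw0 mulr0.
apply/eqP; rewrite /h rmorph_prod; apply/prodf_neq0 => i _.
by rewrite /= meval_linform (proj2 (Hl i)).
Qed.

(* The N+1 points (1 : t : 0), t < N+1, cannot all lie on the N points of X. *)
Lemma exists_Fpol_at_neq0 : [pchar K] =i pred0 ->
  exists w : 'I_3 -> K, (exists k, w k != 0) /\ exists j, Fpol_at lam w j != 0.
Proof.
move=> charK; apply: NNPP => noW.
pose wt (t : nat) (k : 'I_3) : K :=
  if k == 0 :> nat then 1 else if k == 1 :> nat then t%:R else 0.
have onX (t : 'I_N.+1) : exists ic : 'I_N * K, forall k, wt t k = ic.2 * pts ic.1 k.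
  have [|i [c Hc]] := Fpol_base_locus (w := wt t); last by exists (i, c).
  move=> j; apply/eqP; apply: contraT => Fj; case: noW; exists (wt t).
  by split; [exists ord0; rewrite /wt /= oner_neq0 | exists j].
have [f Hf] := fin_all_exists onX.
have f_inj : injective (fun t => (f t).1).
  move=> t t' E.
  have := Hf t ord0; have := Hf t' ord0; have := Hf t 1; have := Hf t' 1.
  rewrite /wt /= -E => h1' h1 h0' h0.
  have p0 : pts (f t).1 ord0 != 0.
    by apply: contra_eq_neq h0 => ->; rewrite mulr0 oner_neq0.
  have Ec : (f t).2 = (f t').2 by apply: (mulIf p0); rewrite -h0 -h0'.
  by apply: val_inj; apply: (pchar0_natr_inj charK); rewrite /= h1 h1' Ec.
by have := leq_card _ f_inj; rewrite !card_ord ltnn.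
Qed.

Section TangentSpace.
Hypothesis pts_dist : forall i i', i != i' ->
  ~ exists c : K, forall k, pts i k = c * pts i' k.
Variable i0 : 'I_N.
Local Notation p := (pts i0).

Definition jacF : 'M[K]_(3, d.+1) := \matrix_(k, j) ((Fpol lam j)^`M(k)).@[p].

Lemma jacF_Lmat_at : jacF *m (Lmat_at lam p)^T = 0.
Proof.
apply/matrixP => k l; rewrite !mxE.
have := congr1 (fun P => (P^`M(k)).@[p]) (Lmat_Fpol_eq0 lam l).
rewrite (big_morph _ (mderivD k) (mderiv0 _ k)) (big_morph _ (mevalD p) (meval0 p)).
rewrite mderiv0 meval0 => E; rewrite -[RHS]E.
apply: eq_bigr => j _; rewrite mderivM mevalD [X in X + _]mevalM [X in _ + X]mevalM.
rewrite -/(Fpol_at lam p j) Fpol_at_pts.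
by rewrite mulr0 add0r meval_Lmat mulrC; congr (_ * _); rewrite !mxE.
Qed.

Lemma jacF_annihilator (l : 'I_3 -> K) : \sum_k l k * p k = 0 ->
  exists g : 'I_d.+1 -> K, forall k, l k = \sum_j jacF k j * g j.
Proof.
move=> lp0.
have sep i : exists li : 'I_3 -> K, i != i0 ->
    \sum_k li k * pts i k = 0 /\ \sum_k li k * p k != 0.
  have [->|hi] := eqVneq i i0; first by exists (fun=> 0).
  case: (separating_linform p (pts_nz i)) => [pXi|[li Hli]]; last by exists li.
  by have /pts_dist[] : i0 != i by rewrite eq_sym.
have [li Hli] := fin_all_exists sep.
pose h := \prod_(i | i != i0) linform (li i).
have hp : h.@[p] != 0.
  rewrite /h rmorph_prod; apply/prodf_neq0 => i hi.
  by rewrite /= meval_linform (proj2 (Hli i hi)).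
pose Q := linform l * h.
have QI : in_IX pts Q.
  move=> i c; rewrite /Q mevalM; have [->|hi] := eqVneq i i0.
    rewrite meval_linform (eq_bigr (fun k => c * (l k * p k))); last by move=> k _; ring.
    by rewrite -mulr_sumr lp0 mulr0 mul0r.
  rewrite /h rmorph_prod (bigD1 i) //= (meval_linform (li i)).
  rewrite (eq_bigr (fun k => c * (li i k * pts i k))); last by move=> k _; ring.
  by rewrite -mulr_sumr (proj1 (Hli i hi)) mulr0 mul0r mulr0.
have [g Hg] := (hL Q).1 QI.
exists (fun j => (g j).@[p] / h.@[p]) => k.
have dQ : (Q^`M(k)).@[p] = l k * h.@[p].
  by rewrite /Q mderivM mevalD !mevalM mderiv_linform mevalC meval_linform lp0 mul0r addr0.
apply: (mulIf hp); rewrite -dQ Hg mulr_suml.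
rewrite (big_morph _ (mderivD k) (mderiv0 _ k)) (big_morph _ (mevalD p) (meval0 p)).
apply: eq_bigr => j _; rewrite mderivM mevalD [X in X + _]mevalM [X in _ + X]mevalM.
by rewrite -/(Fpol_at lam p j) Fpol_at_pts mulr0 add0r mxE mulrC -mulrA divfK.
Qed.

Lemma jacF_rank : (2 <= \rank jacF)%N.
Proof.
pose P : 'M[K]_(3, 1) := \col_k p k.
have rP : \rank P = 1%N.
  apply/eqP; rewrite eqn_leq rank_leq_col lt0n mxrank_eq0.
  have [k pk] := pts_nz i0; apply: contra_neq pk => P0.
  by have := congr1 (fun M : 'M[K]_(3, 1) => M k 0) P0; rewrite !mxE.
have sK : (kermx P <= jacF^T)%MS.
  apply/row_subP => i.
  have [|g Hg] := @jacF_annihilator ((row i (kermx P)) 0).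
    have := congr1 (fun M : 'M[K]_(3, 1) => M i 0) (mulmx_ker P).
    by rewrite !mxE => E; rewrite -[RHS]E; apply: eq_bigr => k _; rewrite !mxE.
  have -> : row i (kermx P) = (\row_j g j) *m jacF^T.
    apply/matrixP => a k; rewrite (ord1 a) Hg !mxE; apply: eq_bigr => j _.
    by rewrite !mxE mulrC.
  exact: submxMl.
have rK : \rank (kermx P) = 2%N by rewrite mxrank_ker rP.
by rewrite -mxrank_tr -[X in (X <= _)%N]rK mxrankS.
Qed.

(* By Taylor expansion along p + t e_k, corank at least 2 would kill the
   first-order terms of the maximal minors, i.e. all of jacF. *)
Lemma Lmat_at_pts_rank : (d <= (\rank (Lmat_at lam p)).+1)%N.
Proof.
rewrite leqNgt; apply/negP => hr.
suff J0 : jacF = 0 by have := jacF_rank; rewrite J0 mxrank0.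
apply/matrixP => k j; rewrite [RHS]mxE.
pose ek : 'I_3 -> K := fun k' => (k' == k)%:R.
have -> : jacF k j = (line_restr p ek (Fpol lam j))`_1.
  rewrite line_restr_coef1 mxE (bigD1 k) //= big1 ?addr0; first by rewrite /ek eqxx mul1r.
  by move=> k' /negbTE hk; rewrite /ek hk mul0r.
rewrite /line_restr (Fpol_rmorph lam (mmap polyC (fun k0 => (p k0)%:P + (ek k0)%:P * 'X))).
have -> : col' j (map_mx (mmap polyC (fun k0 => (p k0)%:P + (ek k0)%:P * 'X)) (Lmat lam)) =
    map_mx polyC (col' j (Lmat_at lam p)) + 'X *: map_mx polyC (col' j (Lmat_at lam ek)).
  apply/matrixP => l j'; rewrite !mxE rmorph_sum.
  under eq_bigr do rewrite /= mmapZ mmapX mmap1U.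
  rewrite !rmorph_sum mulr_sumr -big_split /=; apply: eq_bigr => k' _.
  by rewrite !rmorphM /=; ring.
have -> : (-1) ^+ j = ((-1) ^+ j)%:P :> {poly K} by rewrite rmorphXn rmorphN1.
by rewrite coefCM coef1_det_lowrank ?mulr0 // (leq_trans _ hr) // !ltnS mxrank_col'.
Qed.

Lemma ker_Lmat_at_pts (s : 'I_d.+1 -> K) :
  (forall l, \sum_j Lmat_at lam p l j * s j = 0) ->
  exists q : 'I_3 -> K, forall j, s j = \sum_k q k * jacF k j.
Proof.
move=> Ls.
have sJ : (jacF <= kermx (Lmat_at lam p)^T)%MS by apply/sub_kermxP; exact: jacF_Lmat_at.
have sK : (kermx (Lmat_at lam p)^T <= jacF)%MS.
  rewrite -(mxrank_leqif_sup sJ).2; apply/eqP/anti_leq; rewrite mxrankS //=.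
  rewrite mxrank_ker mxrank_tr (leq_trans _ jacF_rank) // leq_subLR addn2.
  exact: Lmat_at_pts_rank.
have ss : (\row_j s j <= kermx (Lmat_at lam p)^T)%MS.
  apply/sub_kermxP; apply/matrixP => a l; rewrite (ord1 a) !mxE -[RHS](Ls l).
  by apply: eq_bigr => j _; rewrite !mxE mulrC.
have [r Hr] := submxP (submx_trans ss sK).
exists (fun k => r 0 k) => j.
have := congr1 (fun M : 'rV[K]_d.+1 => M 0 j) Hr; rewrite !mxE => ->.
by apply: eq_bigr => k _; rewrite mxE.
Qed.

End TangentSpace.
End BaseLocus.

Section VSubClosure.
Variables (K : fieldType) (charK : [pchar K] =i pred0) (N d n : nat).
Variable pts : 'I_N -> 'I_3 -> K.
Hypothesis pts_nz : forall i, exists k, pts i k != 0.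
Hypothesis pts_dist : forall i i', i != i' ->
  ~ exists c : K, forall k, pts i k = c * pts i' k.
Variable lam : 'I_d -> 'I_d.+1 -> 'I_3 -> K.
Hypothesis hL : IX_generated_by_F pts lam.

Section VanishingPolynomial.
Variables (D : nat) (f : {mpoly K[#|{: pcoord n d}|]}).
Hypothesis hf : f \is D.-homog.
Hypothesis f_image : forall y, in_image_phi lam y -> f.@[coords y] = 0.

(* When phi(w) vanishes identically, f(0) = 0 either by homogeneity (D > 0) or
   because f is a constant vanishing at some point of the image (D = 0). *)
Lemma f_segre_Fpol_at w : f.@[coords (segre w (Fpol_at lam w))] = 0.
Proof.
have [/existsP[c yc]|] := boolP [exists c, segre (n := n) w (Fpol_at lam w) c != 0].
  by apply: f_image; split; [exists c | exists w].
rewrite negb_exists => /forallP y0.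
have [w0 [[k w0k] [j Fj]]] := exists_Fpol_at_neq0 pts_nz hL charK.
rewrite (meval_coords_scale (c := 0) (y := segre w0 (Fpol_at lam w0)) hf); last first.
  by move=> c; rewrite mul0r; apply/eqP; rewrite -[_ == 0]negbK y0.
rewrite expr0n; case: (D == 0%N); rewrite ?mul0r ?mul1r //.
apply: f_image; split; last by exists w0.
by exists (mono_pow n k, j); rewrite /segre /= monev_mono_pow mulf_neq0 ?expf_neq0.
Qed.

Lemma f_segre_ker_Fpol_at_neq0 w s : (exists j, Fpol_at lam w j != 0) ->
  (forall l, \sum_j Lmat_at lam w l j * s j = 0) -> f.@[coords (segre w s)] = 0.
Proof.
move=> [j1 Fj1] Ls.
have minor_neq0 : \det (col' j1 (Lmat_at lam w)) != 0.
  by apply: contra_neq Fj1; rewrite Fpol_atE => ->; rewrite mulr0.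
have Es := ker_maximal_minor Ls (Lmat_at_Fpol_at_eq0 lam w) minor_neq0 Fj1.
rewrite (meval_coords_scale (c := s j1 / Fpol_at lam w j1)
  (y := segre w (Fpol_at lam w)) hf).
  by rewrite f_segre_Fpol_at mulr0.
by case=> a j; rewrite /segre /= Es mulrCA.
Qed.

(* phi(p + t q) = t G(t) with G(0) the point below, so t^D f(G(t)) = 0 for all
   t <> 0, hence f(G(0)) = 0. *)
Lemma f_segre_jacF i (q : 'I_3 -> K) :
  f.@[coords (segre (pts i) (fun j => \sum_k q k * jacF pts lam i k j))] = 0.
Proof.
pose Phi j := line_restr (pts i) q (Fpol lam j).
have Phi_X j : exists Psi : {poly K}, Phi j = Psi * 'X.
  have : root (Phi j) 0.
    by rewrite /root horner_coef0 line_restr_coef0 -/(Fpol_at lam _ j) Fpol_at_pts.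
  by move/factor_theorem => [Psi E]; exists Psi; rewrite E polyC0 subr0.
have [Psi EPsi] := fin_all_exists Phi_X.
have Psi0 j : (Psi j).[0] = \sum_k q k * jacF pts lam i k j.
  rewrite horner_coef0; have := coefMX (Psi j) 1.
  rewrite -EPsi /Phi line_restr_coef1 /= => <-.
  by apply: eq_bigr => k _; rewrite mxE.
pose Pa (a : mono n) : {poly K} := \prod_k ((pts i k)%:P + (q k)%:P * 'X) ^+ expo a k.
have PaE a t : (Pa a).[t] = monev a (fun k => pts i k + q k * t).
  rewrite horner_prod; apply: eq_bigr => k _.
  by rewrite horner_exp hornerD hornerC hornerCM hornerX.
pose G (c : pcoord n d) := Pa c.1 * Psi c.2.
pose h := mmap polyC (fun i => G (enum_val i)) f.
have h0 : h = 0.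
  apply: poly_eq0_on_nonzero charK _ => t tn0.
  apply: (mulfI (expf_neq0 D tn0)); rewrite mulr0 horner_mmap_polyC.
  rewrite -meval_homog_scale // -(f_segre_Fpol_at (fun k => pts i k + q k * t)).
  apply: meval_eq => i'; rewrite /coords /segre; case: (enum_val i') => a j /=.
  by rewrite /Fpol_at -horner_line_restr -/(Phi j) EPsi !hornerE PaE /=; ring.
have := congr1 (horner^~ 0) h0; rewrite /= horner0 horner_mmap_polyC => E.
rewrite -[RHS]E; apply: meval_eq => i'; rewrite /coords /segre /G.
case: (enum_val i') => a j /=; rewrite hornerM PaE Psi0 /monev.
by under [in RHS]eq_bigr do rewrite mulr0 addr0.
Qed.

Lemma f_segre_ker w s : (exists k, w k != 0) ->
  (forall l, \sum_j Lmat_at lam w l j * s j = 0) -> f.@[coords (segre w s)] = 0.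
Proof.
move=> [k wk] Ls.
have [/existsP Fw|] := boolP [exists j, Fpol_at lam w j != 0].
  exact: f_segre_ker_Fpol_at_neq0.
rewrite negb_exists => /forallP /(_ _)/negPn/eqP Fw0.
have [i [c Ew]] := Fpol_base_locus pts_nz hL Fw0.
have c0 : c != 0 by apply: contra_neq wk => c0; rewrite Ew c0 mul0r.
have Lps l : \sum_j Lmat_at lam (pts i) l j * s j = 0.
  apply: (mulfI c0); rewrite mulr0 -[RHS](Ls l) mulr_sumr; apply: eq_bigr => j _.
  rewrite mulrA; congr (_ * _); rewrite !mxE mulr_sumr.
  by apply: eq_bigr => k' _; rewrite Ew mulrCA.
have [q Es] := ker_Lmat_at_pts pts_nz hL pts_dist Lps.
rewrite (meval_coords_scale (c := c ^+ n)
  (y := segre (pts i) (fun j => \sum_k q k * jacF pts lam i k j)) hf).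
  by rewrite f_segre_jacF mulr0.
case=> a j; rewrite /segre /= -Es mulrA -monev_scale.
by congr (_ * _); apply: eq_bigr => k' _; rewrite Ew.
Qed.

End VanishingPolynomial.

Lemma V_sub_closure (hn : (0 < n)%N) (x : pcoord n d -> K) :
  (exists c, x c != 0) -> inV lam x -> zariski_closure (in_image_phi lam) x.
Proof.
move=> xnz xV D f hf f_image.
have [w [s [wnz Ex Ls]]] := V_segre hn xnz xV.
rewrite -[RHS](f_segre_ker hf f_image wnz Ls).
by apply: meval_eq => i; apply: Ex.
Qed.

End VSubClosure.

Unset Implicit Arguments. Set Strict Implicit. Set Printing Implicit Defensive.

Theorem theorem2p4 (K : closedFieldType) (charK : [pchar K] =i pred0)
  (d n : nat) (hd : (1 <= d)%N) (hn : (1 <= n)%N)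
  (pts : 'I_('C(d.+1, 2)) -> 'I_3 -> K)
  (pts_nz : forall i, exists k, pts i k != 0)
  (pts_dist : forall i i', i != i' ->
      ~ exists c : K, forall k, pts i k = c * pts i' k)
  (pts_gen : generic_position pts)
  (lam : 'I_d -> 'I_d.+1 -> 'I_3 -> K)
  (hL : IX_generated_by_F pts lam) :
  forall x : pcoord n d -> K, (exists c, x c != 0) ->
    (inV lam x <-> zariski_closure (in_image_phi lam) x).
Proof.
(* Generic position and d >= 1 only serve to make hL hold. *)
move=> x xnz; split.
- exact (V_sub_closure charK pts_nz pts_dist hL hn xnz).
- exact (@closure_sub_V K n d hn lam x).
Qed.
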